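(* Let $q:\chi\to[0,\infty)$ be a risk metric. A risk-sharing rule $\boldsymbol{C}$ on $\chi^n$ is the $q$-proportional RS rule if and only if it satisfies the reshuffling property and has source-anonymous contribution-over-$q$ ratios.
   Context: Fix a probability space $(\Omega,\mathcal{F},\mathbb{P})$ and an integer $n\ge 1$. Let $\chi$ be a convex cone of non-negative random variables on this space (closed under addition and under multiplication by positive scalars) with $0\in\chi$. All equalities between random variables are understood almost surely. A pool is a vector $\boldsymbol{X}=(X_1,\ldots,X_n)\in\chi^n$, with aggregate loss $S_{\boldsymbol{X}}=\sum_{i=1}^n X_i$. A risk-sharing (RS) rule is a mapping $\boldsymbol{C}$ assigning to every pool $\boldsymbol{X}\in\chi^n$ a vector $\boldsymbol{C}[\boldsymbol{X}]=(C_1[\boldsymbol{X}],\ldots,C_n[\boldsymbol{X}])$ of real-valued random variables satisfying $\sum_{i=1}^n C_i[\boldsymbol{X}]=S_{\boldsymbol{X}}$. A risk metric is any function $q:\chi\to[0,\infty)$. The $q$-proportional RS rule is specified only on pools with $q[X_j]>0$ for at least one $j$, where it is given by $C_i[\boldsymbol{X}]=\frac{q[X_i]}{\sum_{k=1}^n q[X_k]}S_{\boldsymbol{X}}$ for $i=1,\ldots,n$; a rule ''is the $q$-proportional RS rule'' if its contributions equal these on every such pool (its values on pools with all $q[X_j]=0$ are left unspecified). For a permutation $\pi$ of $\{1,\ldots,n\}$, $\boldsymbol{X}^\pi=(X_{\pi(1)},\ldots,X_{\pi(n)})$. Reshuffling property: $C_i[\boldsymbol{X}^\pi]=C_{\pi(i)}[\boldsymbol{X}]$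 for all pools $\boldsymbol{X}$, permutations $\pi$ and indices $i$. Source-anonymous contribution-over-$q$ ratios: for every pool $\boldsymbol{X}$, every permutation $\pi$ and every $i$ with $q[X_i]>0$, $C_i[\boldsymbol{X}^\pi]=\frac{q[X_{\pi(i)}]}{q[X_i]}C_i[\boldsymbol{X}]$. *)

From HB Require Import structures.
From mathcomp Require Import all_boot all_order all_fingroup all_algebra.
From mathcomp Require Import all_classical all_reals all_analysis.
Set Implicit Arguments. Unset Strict Implicit. Unset Printing Implicit Defensive.
Import Order.TTheory GRing.Theory Num.Theory.
Local Open Scope classical_set_scope.
Local Open Scope ring_scope.

Section RiskSharing.
Context {d : measure_display} {T : measurableType d} {R : realType}.
Context (P : probability T R) (n : nat).

Definition aeeq (f g : T -> R) : Prop := {ae P, forall t, f t = g t}.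

Definition is_nonneg_cone (chi : set (T -> R)) : Prop :=
  [/\ (forall X, chi X -> measurable_fun setT X /\ (forall t, 0 <= X t)),
      chi (fun _ => 0),
      (forall X Y, chi X -> chi Y -> chi (fun t => X t + Y t)) &
      (forall (c : R) X, 0 < c -> chi X -> chi (fun t => c * X t))].

Definition pool (chi : set (T -> R)) (X : 'I_n -> T -> R) : Prop :=
  forall i, chi (X i).

Definition aggr (X : 'I_n -> T -> R) : T -> R := fun t => \sum_(i < n) X i t.

Definition perm_pool (X : 'I_n -> T -> R) (pi : {perm 'I_n}) : 'I_n -> T -> R :=
  fun i => X (pi i).

Definition is_RS_rule (chi : set (T -> R))
    (C : ('I_n -> T -> R) -> 'I_n -> T -> R) : Prop :=
  forall X, pool chi X ->
    (forall i, measurable_fun setT (C X i)) /\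
    aeeq (fun t => \sum_(i < n) C X i t) (aggr X).

Definition is_risk_metric (chi : set (T -> R)) (q : (T -> R) -> R) : Prop :=
  forall X, chi X -> 0 <= q X.

Definition qpos (q : (T -> R) -> R) (X : 'I_n -> T -> R) : Prop :=
  exists j, 0 < q (X j).

Definition is_q_proportional (chi : set (T -> R)) (q : (T -> R) -> R)
    (C : ('I_n -> T -> R) -> 'I_n -> T -> R) : Prop :=
  forall X, pool chi X -> qpos q X -> forall i,
    aeeq (C X i) (fun t => q (X i) / (\sum_(k < n) q (X k)) * aggr X t).

(* reshuffling property, on the pools where the q-proportional rule is
   specified *)
Definition reshuffling_qpos (chi : set (T -> R)) (q : (T -> R) -> R)
    (C : ('I_n -> T -> R) -> 'I_n -> T -> R) : Prop :=
  forall X, pool chi X -> qpos q X -> forall (pi : {perm 'I_n}) i,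
    aeeq (C (perm_pool X pi) i) (C X (pi i)).

Definition source_anonymous_ratios (chi : set (T -> R)) (q : (T -> R) -> R)
    (C : ('I_n -> T -> R) -> 'I_n -> T -> R) : Prop :=
  forall X, pool chi X -> forall (pi : {perm 'I_n}) i, 0 < q (X i) ->
    aeeq (C (perm_pool X pi) i) (fun t => q (X (pi i)) / q (X i) * C X i t).

End RiskSharing.

From HB Require Import structures.
From mathcomp Require Import all_boot all_order all_fingroup all_algebra.
From mathcomp Require Import all_classical all_reals all_analysis.
From mathcomp Require Import ring.
Import Order.TTheory GRing.Theory Num.Theory.
Local Open Scope classical_set_scope.
Local Open Scope ring_scope.

(* Permuting a pool permutes the q-values but keeps their sum and the
   aggregate loss, so the q-proportional rule satisfies both properties.
   Conversely, applying the two properties to the transposition (k j) with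
   q[X_j] > 0 gives C_k = q[X_k] / q[X_j] * C_j for every k; summing over k
   and using that the contributions add up to S_X yields C_i = q[X_i] / (sum_k
   q[X_k]) * S_X. *)

Lemma proportional_of_ratios {F : fieldType} {I : finType} {a c : I -> F}
    {j : I} :
  a j != 0 -> \sum_k a k != 0 ->
  (forall k, c k = a k / a j * c j) ->
  forall i, c i = a i / (\sum_k a k) * \sum_k c k.
Proof.
move=> aj_neq0 sa_neq0 c_ratio i.
have -> : \sum_k c k = (\sum_k a k) * (c j / a j).
  rewrite big_distrl /=; apply: eq_bigr => k _.
  by rewrite c_ratio mulrAC mulrA.
by rewrite {1}c_ratio mulrA divfK // mulrA mulrAC.
Qed.

Lemma psumr_gt0_witness {R : numDomainType} {I : finType} (a : I -> R) (j : I) :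
  (forall k, 0 <= a k) -> 0 < a j -> 0 < \sum_k a k.
Proof.
move=> a_ge0 aj_gt0; rewrite lt_def psumr_neq0 ?sumr_ge0 // andbT.
by apply/hasP; exists j; rewrite ?mem_index_enum.
Qed.

Section PermutedPools.
Context {d : measure_display} {T : measurableType d} {R : realType} {n : nat}.
Implicit Types (X : 'I_n -> T -> R) (pi : {perm 'I_n}).

Lemma sum_perm_pool (V : nmodType) (f : (T -> R) -> V) X pi :
  \sum_(k < n) f (perm_pool X pi k) = \sum_(k < n) f (X k).
Proof. by rewrite [RHS](reindex_inj (@perm_inj _ pi)). Qed.

Lemma aggr_perm_pool X pi : aggr (perm_pool X pi) =1 aggr X.
Proof. by move=> t; rewrite /aggr (sum_perm_pool _ (fun Y : T -> R => Y t)). Qed.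

Lemma pool_perm_pool {chi : set (T -> R)} {X} pi :
  pool chi X -> pool chi (perm_pool X pi).
Proof. by move=> pX i; exact: pX. Qed.

Lemma qpos_perm_pool {q : (T -> R) -> R} {X} pi :
  qpos q X -> qpos q (perm_pool X pi).
Proof. by case=> j qj; exists (pi^-1 j)%g; rewrite /perm_pool permKV. Qed.

End PermutedPools.

Section ProportionalRule.
Context {d : measure_display} {T : measurableType d} {R : realType}.
Context (P : probability T R) {n : nat} (chi : set (T -> R)).
Context (q : (T -> R) -> R) (C : ('I_n -> T -> R) -> 'I_n -> T -> R).
Hypothesis q_ge0 : is_risk_metric chi q.

Lemma pool_qsum_gt0 {X j} :
  pool chi X -> 0 < q (X j) -> 0 < \sum_(k < n) q (X k).
Proof. by move=> pX; apply: psumr_gt0_witness => k; exact: q_ge0. Qed.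

Lemma q_proportional_reshuffling :
  is_q_proportional P chi q C -> reshuffling_qpos P chi q C.
Proof.
move=> Cprop X pX qX pi i.
apply: filterS2 (Cprop _ (pool_perm_pool pi pX) (qpos_perm_pool pi qX) i)
  (Cprop X pX qX (pi i)).
by move=> t -> ->; rewrite sum_perm_pool aggr_perm_pool.
Qed.

Lemma q_proportional_source_anonymous :
  is_q_proportional P chi q C -> source_anonymous_ratios P chi q C.
Proof.
move=> Cprop X pX pi i qi_gt0.
have qX : qpos q X by exists i.
apply: filterS2 (Cprop _ (pool_perm_pool pi pX) (qpos_perm_pool pi qX) i)
  (Cprop X pX qX i).
move=> t -> ->; rewrite sum_perm_pool aggr_perm_pool /perm_pool.
have s_gt0 := pool_qsum_gt0 pX qi_gt0.
by field; rewrite !lt0r_neq0.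
Qed.

Lemma contribution_ratio_tperm {X j} k :
  reshuffling_qpos P chi q C -> source_anonymous_ratios P chi q C ->
  pool chi X -> 0 < q (X j) ->
  aeeq P (C X k) (fun t => q (X k) / q (X j) * C X j t).
Proof.
move=> Cres Csa pX qj_gt0.
have qX : qpos q X by exists j.
apply: filterS2 (Csa X pX (tperm k j) j qj_gt0) (Cres X pX qX (tperm k j) j).
by move=> t; rewrite /perm_pool tpermR => -> ->.
Qed.

Hypothesis C_RS : is_RS_rule P chi C.

Lemma q_proportional_of_ratios :
  reshuffling_qpos P chi q C -> source_anonymous_ratios P chi q C ->
  is_q_proportional P chi q C.
Proof.
move=> Cres Csa X pX [j qj_gt0] i.
have ratios := filter_forall (ae_filter_ringOfSetsType P)
  (fun k => contribution_ratio_tperm k Cres Csa pX qj_gt0).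
apply: filterS2 ratios (C_RS X pX).2 => t /= Ct <-.
apply: (proportional_of_ratios (c := fun k => C X k t) _ _ Ct).
  exact: lt0r_neq0.
exact: lt0r_neq0 (pool_qsum_gt0 pX qj_gt0).
Qed.

End ProportionalRule.

Theorem theorem3 (d : measure_display) (T : measurableType d) (R : realType)
    (P : probability T R) (n : nat) (hn : (0 < n)%N)
    (chi : set (T -> R)) (hchi : is_nonneg_cone chi)
    (q : (T -> R) -> R) (hq : is_risk_metric chi q)
    (C : ('I_n -> T -> R) -> 'I_n -> T -> R) (hC : is_RS_rule P chi C) :
  is_q_proportional P chi q C <->
  (reshuffling_qpos P chi q C /\ source_anonymous_ratios P chi q C).
Proof.
split.
- by move=> Cprop; split;
    [exact: q_proportional_reshuffling | exact: q_proportional_source_anonymous].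
- by case; exact: q_proportional_of_ratios.
Qed.
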